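(* Let $n,m,b,k\in\mathbb{N}$ with $b\geq\max\{2m,4\}$ and $k\ge 1$, and let $w>1$ be a number representable with $n$ bits of which the first $m$ are its integer part. Then the values $\hat{z}_1,\dots,\hat{z}_k$ returned by Algorithm PowerOf2Roots$(w,k,n,m,b)$ (described in the context) satisfy $$\left|\hat{z}_i-w^{1/2^i}\right|\leq 2\left(\frac{3}{4}\right)^{b-2m}\left(2+b+\log_2 b\right),\qquad i=1,2,\dots,k.$$
   Context: Fixed precision representation: a number $w\ge 0$ ''given by $n$ bits of which the first $m$ correspond to its integer part'' means $w=\sum_{j=m-n}^{m-1} w^{(j)}2^j$ with $w^{(j)}\in\{0,1\}$. For $x\geq 0$, ''truncating $x$ to $b$ bits after the binary point'' means replacing $x$ by $\lfloor 2^b x\rfloor/2^b$. All arithmetic inside a step is performed exactly; only the stated truncations introduce error. Algorithm SQRT$(w,n,m,b)$ (input $w\geq 1$): if $w=1$, return $1$. Otherwise: let $p\in\mathbb{N}$ with $2^p>w\geq 2^{p-1}$ and set $\hat{x}_0=2^{-p}$; let $s=\lceil\log_2 b\rceil$; for $i=1,\dots,s$ compute exactly $x_i=-w\hat{x}_{i-1}^2+2\hat{x}_{i-1}$ and let $\hat{x}_i$ be $x_i$ truncated to $b$ bits after the binary point. Then let $q\in\mathbb{N}$ with $2^{1-q}>\hat{x}_s\geq 2^{-q}$ and set $\hat{y}_0=2^{\lfloor (q-1)/2\rfloor}$; for $j=1,\dots,s$ compute exactly $y_j=\frac12(3\hat{y}_{j-1}-\hat{x}_s\hat{y}_{j-1}^3)$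 and let $\hat{y}_j$ be $y_j$ truncated to $b$ bits after the binary point. Return $\hat{y}_s$. Algorithm PowerOf2Roots$(w,k,n,m,b)$: set $\hat{z}_1=$ SQRT$(w,n,m,b)$ (a number with $m$ integer bits and $b$ fractional bits); for $i=2,\dots,k$ set $\hat{z}_i=$ SQRT$(\hat{z}_{i-1},m+b,m,b)$. Return $\hat{z}_1,\dots,\hat{z}_k$. *)

From Stdlib Require Import Reals Lra Lia ZArith List ClassicalEpsilon.
Open Scope R_scope.

(* w is given by n bits, the first m of which form its integer part:
   w = sum_{j=m-n}^{m-1} c_j 2^j with c_j in {0,1}. *)
Definition representable (n m : nat) (w : R) : Prop :=
  exists c : nat -> bool,
    w = fold_right Rplus 0
          (map (fun i => if c i then powerRZ 2 (Z.of_nat m - Z.of_nat n + Z.of_nat i)%Z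
                         else 0) (seq 0 n)).

Definition trunc (b : nat) (x : R) : R := IZR (Int_part (2 ^ b * x)) / 2 ^ b.

Definition exp_p (w : R) : nat :=
  epsilon (inhabits 0%nat) (fun p : nat => w < 2 ^ p /\ 2 ^ (p - 1) <= w).

Definition exp_q (x : R) : nat :=
  epsilon (inhabits 0%nat)
    (fun q : nat => x < powerRZ 2 (1 - Z.of_nat q)%Z /\ powerRZ 2 (- Z.of_nat q)%Z <= x).

Definition nsteps (b : nat) : nat := Nat.log2_up b.

Fixpoint sqrt_xhat (w : R) (b : nat) (i : nat) : R :=
  match i with
  | O => / 2 ^ exp_p w
  | S i' => let xh := sqrt_xhat w b i' in trunc b (- w * xh ^ 2 + 2 * xh)
  end.

Fixpoint sqrt_yhat (xs : R) (b : nat) (j : nat) : R :=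
  match j with
  | O => powerRZ 2 (Z.div (Z.of_nat (exp_q xs) - 1) 2)
  | S j' => let yh := sqrt_yhat xs b j' in trunc b (/ 2 * (3 * yh - xs * yh ^ 3))
  end.

(* Algorithm SQRT(w,n,m,b); n and m only describe the input format. *)
Definition SQRT (w : R) (n m b : nat) : R :=
  if Req_EM_T w 1 then 1
  else sqrt_yhat (sqrt_xhat w b (nsteps b)) b (nsteps b).

(* Algorithm PowerOf2Roots(w,k,n,m,b): zhat i for i = 1..k
   (zhat 0 := w is only a convenience value, not returned). *)
Fixpoint zhat (w : R) (n m b : nat) (i : nat) : R :=
  match i with
  | O => w
  | S O => SQRT w n m b
  | S i' => SQRT (zhat w n m b i') (m + b) m b
  end.

From Stdlib Require Import Reals Lra Lia ZArith List ClassicalEpsilon.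
Open Scope R_scope.

(* Each call of SQRT runs two Newton iterations whose residuals, [e = 1 - v x] for the
   reciprocal and [g = 1 - sqrt x * y] for the inverse square root, are squared at every step
   up to the truncation error.  A recurrence [a' <= a ^ 2 + tau] started below [alpha] stays
   below [3 alpha ^ b + 2 tau] after [ceil (log2 b)] steps; with [alpha = 1/2, 3/4] and
   [v < 2 ^ m] this makes one call accurate to [(3/4) ^ (b - 2m) (2 + b)].  As [sqrt] is
   1/2-Lipschitz on [[1, oo)], the errors of the successive calls never exceed twice that,
   for every [i]; the [log2 b] term of the bound is slack. *)

Lemma pow2_pos k : 0 < 2 ^ k.
Proof. apply pow_lt; lra. Qed.

Lemma trunc_le b x : trunc b x <= x.
Proof.
  unfold trunc. pose proof (pow2_pos b). destruct (base_Int_part (2 ^ b * x)).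
  apply Rmult_le_reg_r with (2 ^ b); [lra|]. field_simplify; lra.
Qed.

Lemma trunc_gt b x : x - / 2 ^ b < trunc b x.
Proof.
  unfold trunc. pose proof (pow2_pos b). destruct (base_Int_part (2 ^ b * x)).
  apply Rmult_lt_reg_r with (2 ^ b); [lra|]. field_simplify; lra.
Qed.

Lemma trunc_ge1 b x : 1 <= x -> 1 <= trunc b x.
Proof.
  intro Hx. unfold trunc. pose proof (pow2_pos b).
  destruct (base_Int_part (2 ^ b * x)) as [_ Hfloor].
  assert (2 ^ b * 1 <= 2 ^ b * x) by (apply Rmult_le_compat_l; lra).
  set (I := Int_part (2 ^ b * x)) in *.
  assert (E : 2 ^ b = IZR (2 ^ Z.of_nat b)) by (rewrite <- pow_IZR; reflexivity).
  assert (Hlt : IZR (2 ^ Z.of_nat b - 1) < IZR I) by (rewrite minus_IZR, <- E; lra).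
  apply lt_IZR in Hlt.
  assert (Hle : 2 ^ b <= IZR I) by (rewrite E; apply IZR_le; lia).
  apply Rmult_le_reg_r with (2 ^ b); [lra|]. field_simplify; lra.
Qed.

Lemma INR_lt_pow2 N : INR N < 2 ^ N.
Proof.
  induction N as [|N IH]; [simpl; lra|].
  rewrite S_INR. simpl. pose proof (pow_R1_Rle 2 N). lra.
Qed.

Lemma pow2_unbounded r : exists N, r < 2 ^ N.
Proof.
  destruct (INR_unbounded r) as [N HN]. exists N. pose proof (INR_lt_pow2 N). lra.
Qed.

Lemma exp_p_spec w : 1 <= w -> w < 2 ^ exp_p w /\ 2 ^ (exp_p w - 1) <= w.
Proof.
  intro Hw. unfold exp_p. apply epsilon_spec.
  destruct (pow2_unbounded w) as [N HN].
  induction N as [|N IH]; [simpl in HN; lra|].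
  destruct (Rlt_le_dec w (2 ^ N)) as [Hlt|Hle]; [now apply IH|].
  exists (S N). replace (S N - 1)%nat with N by lia. now split.
Qed.

Lemma powerRZ2_opp_nat q : powerRZ 2 (- Z.of_nat q) = / 2 ^ q.
Proof. rewrite powerRZ_neg', <- pow_powerRZ. reflexivity. Qed.

Lemma powerRZ2_1_sub_nat q : powerRZ 2 (1 - Z.of_nat q) = 2 / 2 ^ q.
Proof.
  replace (1 - Z.of_nat q)%Z with (1 + - Z.of_nat q)%Z by lia.
  rewrite powerRZ_add, powerRZ2_opp_nat by lra. simpl. field. apply pow_nonzero. lra.
Qed.

Lemma exp_q_spec x : 0 < x < 2 -> x < 2 / 2 ^ exp_q x /\ / 2 ^ exp_q x <= x.
Proof.
  intro Hx. rewrite <- powerRZ2_1_sub_nat, <- powerRZ2_opp_nat.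
  unfold exp_q. apply epsilon_spec.
  destruct (pow2_unbounded (/ x)) as [N HN].
  assert (HxN : / 2 ^ N <= x).
  { rewrite <- (Rinv_inv x). apply Rinv_le_contravar; [apply Rinv_0_lt_compat|]; lra. }
  clear HN. induction N as [|N IH].
  - exists 0%nat. rewrite powerRZ2_1_sub_nat, powerRZ2_opp_nat. simpl in *. lra.
  - destruct (Rle_lt_dec (/ 2 ^ N) x) as [Hle|Hlt]; [now apply IH|].
    exists (S N). rewrite powerRZ2_1_sub_nat, powerRZ2_opp_nat.
    replace (2 / 2 ^ S N) with (/ 2 ^ N) by (simpl; field; apply pow_nonzero; lra).
    now split.
Qed.

(* The slack [eps] absorbs the cross term: [(P + 2 tau)^2 <= (1 + eps) P^2 + (1 + 1/eps) 4 tau^2]. *)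
Lemma sq_recurrence_bound (a : nat -> R) (al eps tau : R) :
  0 < eps -> 0 <= tau -> 0 <= al -> (1 + / eps) * 4 * tau <= 1 ->
  (forall j, 0 <= a j) -> (forall j, a (S j) <= a j ^ 2 + tau) -> a 0%nat <= al ->
  forall j, a j <= ((1 + eps) * al) ^ (2 ^ j) / (1 + eps) + 2 * tau.
Proof.
  intros Heps Htau Hal Hsmall Ha Hrec Ha0 j.
  induction j as [|j IH].
  - simpl. replace ((1 + eps) * al * 1 / (1 + eps)) with al by (field; lra). lra.
  - set (P := ((1 + eps) * al) ^ (2 ^ j) / (1 + eps)) in IH.
    assert (HP : 0 <= P).
    { apply Rmult_le_pos; [apply pow_le; nra|left; apply Rinv_0_lt_compat; lra]. }
    replace (((1 + eps) * al) ^ (2 ^ S j) / (1 + eps)) with ((1 + eps) * P ^ 2)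
      by (unfold P; rewrite Nat.pow_succ_r', Nat.mul_comm, pow_mult; field; lra).
    assert (Hsq : (P + 2 * tau) ^ 2 <= (1 + eps) * P ^ 2 + (1 + / eps) * 4 * tau ^ 2).
    { assert (0 <= / eps * (eps * P - 2 * tau) ^ 2).
      { apply Rmult_le_pos; [left; apply Rinv_0_lt_compat; lra|apply pow2_ge_0]. }
      replace ((1 + eps) * P ^ 2 + (1 + / eps) * 4 * tau ^ 2)
        with ((P + 2 * tau) ^ 2 + / eps * (eps * P - 2 * tau) ^ 2) by (field; lra).
      lra. }
    assert (a j ^ 2 <= (P + 2 * tau) ^ 2) by (apply pow_incr; split; [apply Ha|exact IH]).
    pose proof (Hrec j). nra.
Qed.

Lemma one_add_inv_pow_le_3 N : (1 <= N)%nat -> (1 + / INR N) ^ N <= 3.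
Proof.
  intro HN. apply le_INR in HN. simpl in HN.
  apply Rle_trans with (exp (/ INR N) ^ N).
  - apply pow_incr. split; [|apply exp_ineq1_le].
    assert (0 < / INR N) by (apply Rinv_0_lt_compat; lra). lra.
  - rewrite <- Rpower_pow by apply exp_pos. unfold Rpower.
    rewrite ln_exp, Rinv_r by lra. apply exp_le_3.
Qed.

Lemma pow_le_pow_of_le1 (al : R) (k l : nat) : 0 <= al <= 1 -> (k <= l)%nat -> al ^ l <= al ^ k.
Proof.
  intros Hal Hkl. replace l with (k + (l - k))%nat by lia. rewrite pow_add.
  rewrite <- (Rmult_1_r (al ^ k)) at 2. apply Rmult_le_compat_l; [apply pow_le; lra|].
  rewrite <- (pow1 (l - k)). apply pow_incr. lra.
Qed.

Lemma nsteps_spec b : (2 <= b)%nat -> (b <= 2 ^ nsteps b <= 2 * b)%nat.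
Proof.
  intro Hb. unfold nsteps. destruct (Nat.log2_up_spec b) as [Hlo Hup]; [lia|].
  split; [exact Hup|]. destruct (Nat.log2_up b) as [|s]; simpl in *; lia.
Qed.

(* With [eps = 2 ^ -s] the factor [(1 + eps) ^ (2 ^ s)] is at most [3], and [2 ^ s >= b]. *)
Lemma sq_recurrence_nsteps (a : nat -> R) (al tau : R) (b : nat) :
  (2 <= b)%nat -> 0 <= tau -> 0 <= al <= 1 -> (1 + 2 * INR b) * 4 * tau <= 1 ->
  (forall j, 0 <= a j) -> (forall j, a (S j) <= a j ^ 2 + tau) -> a 0%nat <= al ->
  a (nsteps b) <= 3 * al ^ b + 2 * tau.
Proof.
  intros Hb Htau Hal Hsmall Ha Hrec Ha0.
  destruct (nsteps_spec b Hb) as [HN1 HN2].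
  set (N := (2 ^ nsteps b)%nat) in *.
  assert (HbN : INR b <= INR N) by (apply le_INR; lia).
  assert (HN2b : INR N <= 2 * INR b).
  { replace 2 with (INR 2) by reflexivity. rewrite <- mult_INR. apply le_INR. lia. }
  assert (HN : 0 < INR N) by (apply le_INR in Hb; simpl in Hb; lra).
  assert (Hbound := sq_recurrence_bound a al (/ INR N) tau).
  rewrite Rinv_inv in Hbound.
  specialize (Hbound ltac:(apply Rinv_0_lt_compat; lra) Htau ltac:(lra) ltac:(nra)
                Ha Hrec Ha0 (nsteps b)).
  fold N in Hbound. rewrite Rpow_mult_distr in Hbound.
  assert (H3 : (1 + / INR N) ^ N <= 3) by (apply one_add_inv_pow_le_3; lia).
  assert (Hinv : 1 <= 1 + / INR N) by (assert (0 < / INR N) by (apply Rinv_0_lt_compat; lra); lra).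
  assert (Hdiv : (1 + / INR N) ^ N * al ^ N / (1 + / INR N) <= (1 + / INR N) ^ N * al ^ N).
  { apply Rmult_le_reg_r with (1 + / INR N); [lra|].
    unfold Rdiv. rewrite Rmult_assoc, Rinv_l by lra.
    assert (0 <= (1 + / INR N) ^ N * al ^ N) by (apply Rmult_le_pos; apply pow_le; lra). nra. }
  assert (al ^ N <= al ^ b) by (apply pow_le_pow_of_le1; lia || lra).
  assert (0 <= al ^ N) by (apply pow_le; lra).
  nra.
Qed.

Definition inv_residual (v : R) (b i : nat) : R := 1 - v * sqrt_xhat v b i.

(* Newton's step [x' = x (2 - v x)] squares the residual exactly: [1 - v x' = (1 - v x) ^ 2]. *)
Lemma inv_residual_step v b i : 0 < v ->
  inv_residual v b i ^ 2 <= inv_residual v b (S i) <= inv_residual v b i ^ 2 + v / 2 ^ b.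
Proof.
  intro Hv. unfold inv_residual. cbn [sqrt_xhat].
  set (x := sqrt_xhat v b i).
  pose proof (trunc_le b (- v * x ^ 2 + 2 * x)).
  pose proof (trunc_gt b (- v * x ^ 2 + 2 * x)).
  replace ((1 - v * x) ^ 2) with (1 - v * (- v * x ^ 2 + 2 * x)) by ring.
  unfold Rdiv. split; nra.
Qed.

Lemma inv_residual_0 v b : 1 < v -> 0 < inv_residual v b 0 <= 1/2.
Proof.
  intro Hv. destruct (exp_p_spec v) as [Hlt Hle]; [lra|].
  unfold inv_residual. cbn [sqrt_xhat].
  destruct (exp_p v) as [|p]; [simpl in Hlt; lra|].
  replace (S p - 1)%nat with p in Hle by lia. simpl in Hlt |- *.
  pose proof (pow2_pos p).
  replace (1 - v * / (2 * 2 ^ p)) with ((2 * 2 ^ p - v) / (2 * 2 ^ p)) by (field; lra).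
  split; [apply Rdiv_lt_0_compat; lra|].
  apply Rmult_le_reg_r with (2 * 2 ^ p); [lra|]. field_simplify; lra.
Qed.

Lemma inv_residual_bounds v b : 1 < v -> v / 2 ^ b <= 1/4 ->
  forall i, 0 <= inv_residual v b i <= 1/2.
Proof.
  intros Hv Htau i. induction i as [|i IH].
  - pose proof (inv_residual_0 v b Hv). lra.
  - pose proof (inv_residual_step v b i ltac:(lra)). nra.
Qed.

Lemma inv_residual_nsteps v b : 1 < v -> (2 <= b)%nat ->
  (1 + 2 * INR b) * 4 * (v / 2 ^ b) <= 1 ->
  inv_residual v b (nsteps b) <= 3 / 2 ^ b + 2 * (v / 2 ^ b).
Proof.
  intros Hv Hb Hsmall. pose proof (pow2_pos b). pose proof (pos_INR b).
  assert (Htau : 0 < v / 2 ^ b) by (apply Rdiv_lt_0_compat; lra).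
  replace (3 / 2 ^ b) with (3 * (1/2) ^ b) by (unfold Rdiv; rewrite Rmult_1_l, pow_inv; ring).
  apply sq_recurrence_nsteps; auto; try lra.
  - intro j. apply (inv_residual_bounds v b Hv); nra.
  - intro j. apply (inv_residual_step v b j). lra.
  - pose proof (inv_residual_0 v b Hv). lra.
Qed.

Definition inv_sqrt_residual (x : R) (b j : nat) : R := 1 - sqrt x * sqrt_yhat x b j.

Lemma sqrt_yhat_0_spec x b : 0 < x < 1 ->
  1 <= sqrt_yhat x b 0 /\ 1/4 <= x * sqrt_yhat x b 0 ^ 2 < 1.
Proof.
  intro Hx. destruct (exp_q_spec x) as [Hlt Hle]; [lra|].
  cbn [sqrt_yhat]. set (q := exp_q x) in *.
  assert (Hq : (1 <= q)%nat) by (destruct q; [simpl in Hle; lra|lia]).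
  set (j := ((q - 1) / 2)%nat).
  assert (Hj : (2 * j + 1 <= q <= 2 * j + 2)%nat).
  { pose proof (Nat.div_mod (q - 1) 2 ltac:(lia)) as Hdiv. fold j in Hdiv.
    pose proof (Nat.mod_upper_bound (q - 1) 2 ltac:(lia)). lia. }
  replace ((Z.of_nat q - 1) / 2)%Z with (Z.of_nat j)
    by (unfold j; rewrite Nat2Z.inj_div, Nat2Z.inj_sub by lia; reflexivity).
  rewrite <- pow_powerRZ.
  assert (H2q : 2 ^ q * / 2 ^ q = 1) by (apply Rinv_r, pow_nonzero; lra).
  assert (Hq0 : 0 < 2 ^ q) by apply pow2_pos.
  assert (Hlo : 2 * (2 ^ j) ^ 2 <= 2 ^ q).
  { rewrite <- pow_mult. change (2 * 2 ^ (j * 2)) with (2 ^ S (j * 2)). apply Rle_pow; lia || lra. }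
  assert (Hhi : 2 ^ q <= 4 * (2 ^ j) ^ 2).
  { rewrite <- pow_mult. replace (4 * 2 ^ (j * 2)) with (2 ^ S (S (j * 2))) by (simpl; ring).
    apply Rle_pow; lia || lra. }
  split; [apply pow_R1_Rle; lra|].
  unfold Rdiv in Hlt. split; nra.
Qed.

Lemma inv_sqrt_residual_step x b j : 0 < x < 1 ->
  1 <= sqrt_yhat x b j -> 0 <= inv_sqrt_residual x b j <= 1 ->
  1 <= sqrt_yhat x b (S j) /\
  0 <= inv_sqrt_residual x b (S j) <= 3/2 * inv_sqrt_residual x b j ^ 2 + / 2 ^ b.
Proof.
  intros Hx Hy Hg. unfold inv_sqrt_residual in *. cbn [sqrt_yhat].
  set (y := sqrt_yhat x b j) in *.
  assert (Hr : sqrt x * sqrt x = x) by (apply sqrt_sqrt; lra).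
  assert (Hr0 : 0 < sqrt x) by (apply sqrt_lt_R0; lra).
  assert (Hr1 : sqrt x < 1) by nra.
  set (r := sqrt x) in *.
  set (F := / 2 * (3 * y - x * y ^ 3)).
  assert (HF : 1 <= F).
  { replace F with (y * (3 - (r * y) ^ 2) / 2) by (unfold F; rewrite <- Hr; field).
    assert ((r * y) ^ 2 <= 1) by nra. nra. }
  set (g := 1 - r * y) in *.
  assert (Hres : 1 - r * F = g ^ 2 * (3 - g) / 2) by (unfold g, F; rewrite <- Hr; field).
  pose proof (trunc_le b F). pose proof (trunc_gt b F).
  pose proof (pow2_pos b).
  assert (0 < / 2 ^ b) by (apply Rinv_0_lt_compat; lra).
  split; [now apply trunc_ge1|].
  split; nra.
Qed.

Lemma inv_sqrt_residual_bounds x b : 0 < x < 1 -> / 2 ^ b <= 1/16 ->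
  forall j, 1 <= sqrt_yhat x b j /\ 0 <= inv_sqrt_residual x b j <= 1/2.
Proof.
  intros Hx Hb j. induction j as [|j [Hy Hg]].
  - destruct (sqrt_yhat_0_spec x b Hx) as [Hy Hxy].
    assert (Hr : sqrt x * sqrt x = x) by (apply sqrt_sqrt; lra).
    assert (0 < sqrt x) by (apply sqrt_lt_R0; lra).
    unfold inv_sqrt_residual. set (r := sqrt x) in *. set (u := r * sqrt_yhat x b 0).
    assert (Hu : u ^ 2 = x * sqrt_yhat x b 0 ^ 2) by (unfold u; rewrite <- Hr; ring).
    assert (0 < u) by (unfold u; nra).
    split; [exact Hy|]. nra.
  - destruct (inv_sqrt_residual_step x b j Hx Hy ltac:(lra)) as [Hy' Hg']. nra.
Qed.

Lemma inv_sqrt_residual_nsteps x b : 0 < x < 1 -> (2 <= b)%nat ->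
  (1 + 2 * INR b) * 4 * (3/2 / 2 ^ b) <= 1 ->
  inv_sqrt_residual x b (nsteps b) <= 2 * (3/4) ^ b + 2 / 2 ^ b.
Proof.
  intros Hx Hb Hsmall.
  pose proof (pow2_pos b).
  assert (Htau : 0 < 3/2 / 2 ^ b) by (apply Rdiv_lt_0_compat; lra).
  assert (Hb16 : / 2 ^ b <= 1/16).
  { apply le_INR in Hb. simpl in Hb. unfold Rdiv in Htau, Hsmall. nra. }
  pose proof (inv_sqrt_residual_bounds x b Hx Hb16) as Hbounds.
  (* [g' <= 3/2 g ^ 2 + 2 ^ -b] is the recurrence [a' <= a ^ 2 + tau] for [a = 3/2 g]. *)
  assert (Hrec := sq_recurrence_nsteps (fun j => 3/2 * inv_sqrt_residual x b j)
                    (3/4) (3/2 / 2 ^ b) b Hb ltac:(lra) ltac:(lra) Hsmall).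
  cbv beta in Hrec. unfold Rdiv in Hrec |- *.
  enough (3/2 * inv_sqrt_residual x b (nsteps b) <= 3 * (3/4) ^ b + 2 * (3/2 * / 2 ^ b)) by lra.
  apply Hrec.
  - intro j. destruct (Hbounds j). lra.
  - intro j. destruct (Hbounds j) as [Hy Hg].
    destruct (inv_sqrt_residual_step x b j Hx Hy ltac:(lra)). nra.
  - destruct (Hbounds 0%nat). lra.
Qed.

Definition sqrt_err_bound (m b : nat) : R := (3/4) ^ (b - 2 * m) * (2 + INR b).

Lemma sqrt_mul_le v t c : 0 <= v -> 0 <= t -> 0 <= c -> v * t ^ 2 <= c ^ 2 -> sqrt v * t <= c.
Proof.
  intros Hv Ht Hc Hsq.
  rewrite <- (sqrt_pow2 t Ht), <- sqrt_mult, <- (sqrt_pow2 c Hc) by (try apply pow2_ge_0; lra).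
  now apply sqrt_le_1_alt.
Qed.

Lemma pow_split_2m (a : R) m b : (2 * m <= b)%nat -> a ^ b = a ^ m * a ^ m * a ^ (b - 2 * m).
Proof. intro Hmb. rewrite <- !pow_add. f_equal. lia. Qed.

Lemma two_le_pow2 m : (1 <= m)%nat -> 2 <= 2 ^ m.
Proof. intro Hm. replace 2 with (2 ^ 1) at 1 by ring. apply Rle_pow; lia || lra. Qed.

Lemma sqrt_err_bound_ge_pow m b : (1 <= m)%nat -> (2 * m <= b)%nat ->
  4 * (3/4) ^ (b - 2 * m) <= sqrt_err_bound m b.
Proof.
  intros Hm Hmb. unfold sqrt_err_bound. apply le_INR in Hmb. rewrite mult_INR in Hmb.
  apply le_INR in Hm. pose proof (pow_lt (3/4) (b - 2 * m)). simpl in *. nra.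
Qed.

Section ErrorBudget.

Variables (m b : nat) (v : R).
Hypotheses (Hm : (1 <= m)%nat) (Hmb : (2 * m <= b)%nat) (Hv : 0 <= v < 2 ^ m).

Let A := 2 ^ m.
Let D := 2 ^ (b - 2 * m).
Let P := (3/4) ^ (b - 2 * m).

Lemma budget_inv_residual : sqrt v * (5 * (2 ^ m / 2 ^ b)) <= sqrt_err_bound m b.
Proof.
  pose proof (sqrt_err_bound_ge_pow m b Hm Hmb) as HE. fold P in HE.
  pose proof (two_le_pow2 m Hm) as HA. fold A in HA.
  assert (1 <= D * P) by (unfold D, P; rewrite <- Rpow_mult_distr; apply pow_R1_Rle; lra).
  assert (0 < P) by (apply pow_lt; lra). assert (0 < D) by (apply pow_lt; lra).
  rewrite (pow_split_2m 2 m b Hmb). fold A D. fold A in Hv.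
  set (t := 5 * (A / (A * A * D))).
  assert (HtAD : t * A * D = 5) by (unfold t; field; lra).
  assert (0 < t) by (unfold t; apply Rmult_lt_0_compat; [lra|apply Rdiv_lt_0_compat; nra]).
  apply sqrt_mul_le; [lra|lra|nra|].
  assert (Hsq : A * (A * t ^ 2 * D ^ 2) = (t * A * D) ^ 2) by ring.
  rewrite HtAD in Hsq.
  assert (A * t ^ 2 * D ^ 2 <= 25 / 2) by nra.
  assert (v * t ^ 2 * D ^ 2 <= A * t ^ 2 * D ^ 2) by (apply Rmult_le_compat_r; nra).
  assert (v * t ^ 2 * D ^ 2 <= 16 * P ^ 2 * D ^ 2) by nra.
  apply Rle_trans with (16 * P ^ 2); [|nra].
  apply Rmult_le_reg_r with (D ^ 2); nra.
Qed.

Lemma budget_inv_sqrt_residual : sqrt v * (4 * (3/4) ^ b) <= sqrt_err_bound m b.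
Proof.
  pose proof (sqrt_err_bound_ge_pow m b Hm Hmb) as HE. fold P in HE.
  assert (0 < P) by (apply pow_lt; lra).
  set (Q := (3/4) ^ m). assert (0 < Q) by (apply pow_lt; lra).
  assert (HAQ : A * Q ^ 4 <= 1).
  { unfold A, Q. rewrite <- pow_mult, Nat.mul_comm, pow_mult, <- Rpow_mult_distr.
    rewrite <- (pow_O (2 * (3/4) ^ 4)). apply pow_le_pow_of_le1; [lra|lia]. }
  rewrite (pow_split_2m (3/4) m b Hmb). fold Q P.
  apply sqrt_mul_le; [lra|nra|nra|].
  apply Rle_trans with (16 * P ^ 2); [|nra].
  fold A in Hv. assert (0 <= Q ^ 4 * P ^ 2) by (apply Rmult_le_pos; apply pow_le; lra).
  replace (v * (4 * (Q * Q * P)) ^ 2) with (16 * (v * (Q ^ 4 * P ^ 2))) by ring.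
  apply Rmult_le_compat_l; [lra|]. nra.
Qed.

Lemma budget_coarse :
  1 < (1 + 2 * INR b) * 4 * (2 ^ m / 2 ^ b) -> sqrt v * (1/2) <= sqrt_err_bound m b.
Proof.
  intro Hlarge. pose proof (two_le_pow2 m Hm) as HA. fold A in HA.
  assert (1 <= D * P * P) by (unfold D, P; rewrite <- !Rpow_mult_distr; apply pow_R1_Rle; lra).
  assert (0 < P) by (apply pow_lt; lra). assert (0 < D) by (apply pow_lt; lra).
  rewrite (pow_split_2m 2 m b Hmb) in Hlarge. fold A D in Hlarge.
  assert (HAD : A * D < (1 + 2 * INR b) * 4).
  { replace ((1 + 2 * INR b) * 4 * (A / (A * A * D))) with ((1 + 2 * INR b) * 4 / (A * D))
      in Hlarge by (field; lra).
    apply Rmult_lt_reg_r with (/ (A * D)); [apply Rinv_0_lt_compat; nra|].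
    rewrite Rinv_r by nra. lra. }
  unfold sqrt_err_bound. fold P. pose proof (pos_INR b).
  apply sqrt_mul_le; [lra|lra|nra|]. fold A in Hv.
  assert (A <= A * (D * P * P)) by nra.
  assert (A * (D * P * P) <= (1 + 2 * INR b) * 4 * P ^ 2).
  { replace (A * (D * P * P)) with (A * D * P ^ 2) by ring. apply Rmult_le_compat_r; nra. }
  nra.
Qed.

(* When the truncation errors are too large for the contraction argument, the bound
   already exceeds [sqrt v / 2]. *)
Lemma sqrt_mul_residuals_le e g : 0 <= e <= 1/2 -> 0 <= g <= 1/2 ->
  ((1 + 2 * INR b) * 4 * (2 ^ m / 2 ^ b) <= 1 -> e <= 5 * (2 ^ m / 2 ^ b) /\ g <= 4 * (3/4) ^ b) ->
  sqrt v * e <= sqrt_err_bound m b /\ sqrt v * g <= sqrt_err_bound m b.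
Proof.
  intros He Hg Hsmall. pose proof (sqrt_pos v).
  destruct (Rle_lt_dec ((1 + 2 * INR b) * 4 * (2 ^ m / 2 ^ b)) 1) as [Hle|Hlarge].
  - destruct (Hsmall Hle) as [He' Hg']. split.
    + apply Rle_trans with (sqrt v * (5 * (2 ^ m / 2 ^ b))); [apply Rmult_le_compat_l; lra|].
      exact budget_inv_residual.
    + apply Rle_trans with (sqrt v * (4 * (3/4) ^ b)); [apply Rmult_le_compat_l; lra|].
      exact budget_inv_sqrt_residual.
  - pose proof (budget_coarse Hlarge).
    split; (apply Rle_trans with (sqrt v * (1/2)); [apply Rmult_le_compat_l|]; lra).
Qed.

End ErrorBudget.

(* With [c = sqrt x * sqrt v] we have [c ^ 2 = 1 - e], hence [1 <= c * (1 + e)] for [e <= 1/2]. *)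
Lemma sqrt_error_of_residuals v x z : 0 < v -> 0 < x ->
  0 <= 1 - v * x <= 1/2 -> 0 <= sqrt x * z <= 1 ->
  - (sqrt v * (1 - sqrt x * z)) <= z - sqrt v <= sqrt v * (1 - v * x).
Proof.
  intros Hv Hx He Hg.
  assert (Hr : sqrt x * sqrt x = x) by (apply sqrt_sqrt; lra).
  assert (Hs : sqrt v * sqrt v = v) by (apply sqrt_sqrt; lra).
  assert (0 < sqrt x) by (apply sqrt_lt_R0; lra).
  assert (0 < sqrt v) by (apply sqrt_lt_R0; lra).
  set (r := sqrt x) in *. set (s := sqrt v) in *.
  set (e := 1 - v * x) in *.
  assert (Hc2 : (r * s) ^ 2 = 1 - e) by (unfold e; rewrite <- Hr, <- Hs; ring).
  assert (Hc1 : r * s <= 1) by nra.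
  assert (Hce : 1 <= r * s * (1 + e)).
  { assert (0 <= e * (1 - e - e ^ 2)) by (apply Rmult_le_pos; nra).
    assert (((r * s) * (1 + e)) ^ 2 >= 1).
    { rewrite Rpow_mult_distr, Hc2.
      replace ((1 - e) * (1 + e) ^ 2) with (1 + e * (1 - e - e ^ 2)) by ring. lra. }
    assert (0 <= r * s * (1 + e)) by (apply Rmult_le_pos; nra).
    destruct (Rle_lt_dec 1 (r * s * (1 + e))); [assumption|nra]. }
  split; apply Rmult_le_reg_l with r; nra.
Qed.

Lemma sq_le_of_residuals v x z : 0 < x -> 1/2 <= v * x -> 0 <= sqrt x * z <= 1 -> z ^ 2 <= 2 * v.
Proof.
  intros Hx Hvx Hz.
  assert (Hzx : z ^ 2 * x <= 1).
  { replace (z ^ 2 * x) with ((sqrt x * z) ^ 2) by (rewrite Rpow_mult_distr, pow2_sqrt; lra). nra. }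
  assert (0 <= v * (1 - z ^ 2 * x)) by (apply Rmult_le_pos; nra).
  assert (0 <= z ^ 2 * (v * x - 1/2)) by (apply Rmult_le_pos; [apply pow2_ge_0|lra]).
  lra.
Qed.

Lemma sqrt_xhat_bounds v b i : 1 < v -> v / 2 ^ b <= 1/4 -> 0 < sqrt_xhat v b i < 1.
Proof.
  intros Hv Hvb. pose proof (inv_residual_bounds v b Hv Hvb i) as He.
  unfold inv_residual in He. split; nra.
Qed.

Lemma newton_residuals_small v m b : 1 < v < 2 ^ m -> (1 <= m)%nat -> (2 <= b)%nat ->
  (1 + 2 * INR b) * 4 * (2 ^ m / 2 ^ b) <= 1 ->
  inv_residual v b (nsteps b) <= 5 * (2 ^ m / 2 ^ b) /\
  inv_sqrt_residual (sqrt_xhat v b (nsteps b)) b (nsteps b) <= 4 * (3/4) ^ b.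
Proof.
  intros Hv Hm Hb Hsmall.
  pose proof (pow2_pos b). pose proof (pos_INR b). pose proof (two_le_pow2 m Hm).
  assert (Hinv : 0 < / 2 ^ b) by (apply Rinv_0_lt_compat; lra).
  assert (/ 2 ^ b <= (3/4) ^ b) by (rewrite <- pow_inv; apply pow_incr; lra).
  unfold Rdiv in *.
  assert (v * / 2 ^ b <= 2 ^ m * / 2 ^ b) by (apply Rmult_le_compat_r; lra).
  assert (3/2 * / 2 ^ b <= 2 ^ m * / 2 ^ b) by (apply Rmult_le_compat_r; lra).
  assert (2 ^ m * / 2 ^ b <= 1/4) by nra.
  assert (Hscale : forall t, t <= 2 ^ m * / 2 ^ b -> (1 + 2 * INR b) * 4 * t <= 1).
  { intros t Ht. apply Rle_trans with ((1 + 2 * INR b) * 4 * (2 ^ m * / 2 ^ b)); [|exact Hsmall].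
    apply Rmult_le_compat_l; lra. }
  split.
  - pose proof (inv_residual_nsteps v b ltac:(lra) Hb (Hscale (v / 2 ^ b) ltac:(unfold Rdiv; lra))).
    unfold Rdiv in *. lra.
  - assert (Hx : 0 < sqrt_xhat v b (nsteps b) < 1) by (apply sqrt_xhat_bounds; unfold Rdiv; lra).
    pose proof (inv_sqrt_residual_nsteps _ b Hx Hb (Hscale (3/2 / 2 ^ b) ltac:(unfold Rdiv; lra))).
    unfold Rdiv in *. lra.
Qed.

Lemma SQRT_spec v n m b : 1 <= v < 2 ^ m -> (1 <= m)%nat -> (2 * m <= b)%nat -> (4 <= b)%nat ->
  1 <= SQRT v n m b < 2 ^ m /\ Rabs (SQRT v n m b - sqrt v) <= sqrt_err_bound m b.
Proof.
  intros Hv Hm Hmb Hb.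
  pose proof (two_le_pow2 m Hm) as HA. pose proof (pow2_pos b).
  unfold SQRT. destruct (Req_EM_T v 1) as [->|Hv1].
  { pose proof (sqrt_err_bound_ge_pow m b Hm Hmb). pose proof (pow_le (3/4) (b - 2 * m)).
    rewrite sqrt_1, Rminus_diag, Rabs_R0. split; lra. }
  assert (Hvb : v / 2 ^ b <= 1/4).
  { assert (4 * 2 ^ m <= 2 ^ b).
    { replace (4 * 2 ^ m) with (2 ^ (m + 2)) by (rewrite pow_add; simpl; ring).
      apply Rle_pow; lia || lra. }
    apply Rmult_le_reg_r with (2 ^ b); [lra|]. field_simplify; lra. }
  assert (Hb16 : / 2 ^ b <= 1/16).
  { replace (1/16) with (/ 2 ^ 4) by (simpl; field).
    apply Rinv_le_contravar; [simpl; lra|]. apply Rle_pow; lia || lra. }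
  pose proof (sqrt_xhat_bounds v b (nsteps b) ltac:(lra) Hvb) as Hx.
  pose proof (inv_residual_bounds v b ltac:(lra) Hvb (nsteps b)) as He.
  set (x := sqrt_xhat v b (nsteps b)) in *.
  destruct (inv_sqrt_residual_bounds x b Hx Hb16 (nsteps b)) as [Hz Hg].
  destruct (sqrt_mul_residuals_le m b v Hm Hmb ltac:(lra) _ _ He Hg
              (newton_residuals_small v m b ltac:(lra) Hm ltac:(lia))) as [Hbe Hbg].
  unfold inv_residual, inv_sqrt_residual in *. fold x in He, Hbe.
  set (z := sqrt_yhat x b (nsteps b)) in *.
  destruct (sqrt_error_of_residuals v x z ltac:(lra) ltac:(lra) He ltac:(lra)) as [Hlo Hup].
  pose proof (sq_le_of_residuals v x z ltac:(lra) ltac:(lra) ltac:(lra)).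
  split; [split; [exact Hz|]|apply Rabs_le; lra].
  destruct (Rlt_le_dec z (2 ^ m)); [assumption|nra].
Qed.

Lemma representable_sum_le (a : Z) (c : nat -> bool) n k :
  fold_right Rplus 0 (map (fun i => if c i then powerRZ 2 (a + Z.of_nat i) else 0) (seq k n))
  <= powerRZ 2 (a + Z.of_nat (k + n)) - powerRZ 2 (a + Z.of_nat k).
Proof.
  revert k. induction n as [|n IH]; intro k.
  - rewrite Nat.add_0_r. simpl. lra.
  - cbn [seq map fold_right]. specialize (IH (S k)).
    replace (k + S n)%nat with (S k + n)%nat by lia.
    assert (Hdouble : powerRZ 2 (a + Z.of_nat (S k)) = 2 * powerRZ 2 (a + Z.of_nat k)).
    { replace (a + Z.of_nat (S k))%Z with (1 + (a + Z.of_nat k))%Z by lia.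
      rewrite powerRZ_add by discrR. simpl. ring. }
    rewrite Hdouble in IH.
    assert (0 <= powerRZ 2 (a + Z.of_nat k)) by (apply powerRZ_le; lra).
    destruct (c k); lra.
Qed.

Lemma representable_lt n m w : representable n m w -> w < 2 ^ m.
Proof.
  intros [c ->].
  pose proof (representable_sum_le (Z.of_nat m - Z.of_nat n) c n 0) as Hsum.
  replace (Z.of_nat m - Z.of_nat n + Z.of_nat (0 + n))%Z with (Z.of_nat m) in Hsum by lia.
  rewrite <- pow_powerRZ in Hsum.
  pose proof (powerRZ_lt 2 (Z.of_nat m - Z.of_nat n + Z.of_nat 0) ltac:(lra)). lra.
Qed.

(* [SQRT] does not use its format argument [n], so both branches of [zhat] are this call. *)
Lemma zhat_S w n m b i : zhat w n m b (S i) = SQRT (zhat w n m b i) n m b.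
Proof. destruct i; reflexivity. Qed.

Lemma Rpower_inv_pow2_S w i : 0 < w -> Rpower w (/ 2 ^ S i) = sqrt (Rpower w (/ 2 ^ i)).
Proof.
  intro Hw. rewrite <- Rpower_sqrt by apply exp_pos. rewrite Rpower_mult.
  f_equal. simpl. rewrite Rinv_mult. ring.
Qed.

Lemma Rpower_inv_pow2_ge1 w i : 1 <= w -> 1 <= Rpower w (/ 2 ^ i).
Proof.
  intro Hw. rewrite <- (Rpower_O w) by lra. apply Rle_Rpower; [exact Hw|].
  left. apply Rinv_0_lt_compat, pow2_pos.
Qed.

Lemma Rabs_sqrt_sub_le a c : 1 <= a -> 1 <= c -> Rabs (sqrt a - sqrt c) <= Rabs (a - c) / 2.
Proof.
  intros Ha Hc.
  assert (Sa : sqrt a * sqrt a = a) by (apply sqrt_sqrt; lra).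
  assert (Sc : sqrt c * sqrt c = c) by (apply sqrt_sqrt; lra).
  assert (1 <= sqrt a) by (rewrite <- sqrt_1; apply sqrt_le_1_alt; lra).
  assert (1 <= sqrt c) by (rewrite <- sqrt_1; apply sqrt_le_1_alt; lra).
  set (p := sqrt a) in *. set (q := sqrt c) in *.
  replace (a - c) with ((p - q) * (p + q)) by (rewrite <- Sa, <- Sc; ring).
  rewrite Rabs_mult, (Rabs_right (p + q)) by lra.
  pose proof (Rabs_pos (p - q)). nra.
Qed.

(* Each call adds at most [sqrt_err_bound m b] and [sqrt] halves the inherited error. *)
Lemma zhat_error w n m b : 1 <= w < 2 ^ m -> (1 <= m)%nat -> (2 * m <= b)%nat -> (4 <= b)%nat ->
  forall i, 1 <= zhat w n m b i < 2 ^ m /\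
    Rabs (zhat w n m b i - Rpower w (/ 2 ^ i)) <= 2 * sqrt_err_bound m b.
Proof.
  intros Hw Hm Hmb Hb i. induction i as [|i [Hz Herr]].
  - pose proof (sqrt_err_bound_ge_pow m b Hm Hmb). pose proof (pow_le (3/4) (b - 2 * m)).
    simpl. rewrite Rinv_1, Rpower_1, Rminus_diag, Rabs_R0 by lra. split; [exact Hw|lra].
  - rewrite zhat_S, Rpower_inv_pow2_S by lra.
    destruct (SQRT_spec (zhat w n m b i) n m b Hz Hm Hmb Hb) as [Hz' Herr'].
    pose proof (Rabs_sqrt_sub_le _ _ (proj1 Hz) (Rpower_inv_pow2_ge1 w i ltac:(lra))).
    split; [exact Hz'|].
    set (z := zhat w n m b i) in *. set (r := Rpower w (/ 2 ^ i)) in *.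
    replace (SQRT z n m b - sqrt r) with ((SQRT z n m b - sqrt z) + (sqrt z - sqrt r)) by ring.
    eapply Rle_trans; [apply Rabs_triang|]. lra.
Qed.

Theorem theorem2 (n m b k : nat) (w : R) :
  (Nat.max (2 * m) 4 <= b)%nat -> (1 <= k)%nat ->
  1 < w -> representable n m w ->
  forall i : nat, (1 <= i <= k)%nat ->
    Rabs (zhat w n m b i - Rpower w (/ 2 ^ i))
      <= 2 * (3 / 4) ^ (b - 2 * m) * (2 + INR b + ln (INR b) / ln 2).
Proof.
  intros Hb _ Hw Hrepr i _.
  pose proof (representable_lt n m w Hrepr) as Hwm.
  assert (Hm : (1 <= m)%nat) by (destruct m; [simpl in Hwm; lra|lia]).
  assert (Hb4 : (4 <= b)%nat) by lia.
  destruct (zhat_error w n m b ltac:(lra) Hm ltac:(lia) Hb4 i) as [_ Herr].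
  assert (Hlog : 0 <= ln (INR b) / ln 2).
  { assert (4 <= INR b) by (apply (le_INR 4) in Hb4; simpl in Hb4; lra).
    assert (0 < ln 2) by (rewrite <- ln_1; apply ln_increasing; lra).
    assert (0 < ln (INR b)) by (rewrite <- ln_1; apply ln_increasing; lra).
    unfold Rdiv. apply Rmult_le_pos; [lra|left; apply Rinv_0_lt_compat; lra]. }
  unfold sqrt_err_bound in Herr. pose proof (pow_le (3/4) (b - 2 * m) ltac:(lra)). nra.
Qed.
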